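(* Assume each $\tilde f_{i,j}:\mathbb{R}^d\to\mathbb{R}$ is convex and $\tilde L$-smooth, let $\lambda>0$ and $p\in(0,1)$, and let $x,w\in\mathbb{R}^{nd}$ be arbitrary. Let $g\in\mathbb{R}^{nd}$ be the random estimator defined in the context. Then $$\mathbb{E}\,\|g-\nabla F(x)\|^2\le2\mathcal{L}\,D_F(w,x),\qquad\text{where }\ \mathcal{L}=\max\Big\{\frac{\tilde L}{n(1-p)},\frac{\lambda}{np}\Big\}.$$
   Context: Each local loss is a finite sum $f_i=\frac1m\sum_{j=1}^m\tilde f_{i,j}$. For $x=[x_1,\dots,x_n]\in\mathbb{R}^{nd}$, define $$F(x)=\frac1n\sum_i f_i(x_i)+\frac{\lambda}{2n}\sum_i\|x_i-\bar x\|^2,\qquad \bar x=\frac1n\sum_i x_i .$$ Its gradient has blocks $(\nabla F(x))_i=\frac1n\nabla f_i(x_i)+\frac\lambda n(x_i-\bar x)$. The Bregman divergence is $D_F(w,x)=F(w)-F(x)-\langle\nabla F(x),w-x\rangle$. The estimator $g$ is defined as follows. - With probability $1-p$: for each client $i$ an index $j\in\{1,\dots,m\}$ is drawn uniformly at random, and $$g_i=\frac{1}{n(1-p)}\big(\nabla\tilde f_{i,j}(x_i)-\nabla\tilde f_{i,j}(w_i)\big)+\frac1n\nabla f_i(w_i)+\frac\lambda n(w_i-\bar w).$$ - With probability $p$: $$g_i=\frac{\lambda}{np}(x_i-\bar x)-\frac{(p^{-1}-1)\lambda}{n}(w_i-\bar w)+\frac1n\nabla f_i(w_i).$$ *)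

From HB Require Import structures.
From mathcomp Require Import all_boot all_order all_algebra.
From mathcomp Require Import all_classical all_reals all_analysis.
Set Implicit Arguments. Unset Strict Implicit. Unset Printing Implicit Defensive.
Import Order.TTheory GRing.Theory Num.Theory.
Import numFieldNormedType.Exports.
Local Open Scope ring_scope.

Section Defs.
Variable R : realType.

Definition dotv d (u v : 'rV[R]_d) : R := \sum_(k < d) u ord0 k * v ord0 k.
Definition sqnorm d (u : 'rV[R]_d) : R := dotv u u.
Definition enorm d (u : 'rV[R]_d) : R := Num.sqrt (sqnorm u).

Definition grad d (f : 'rV[R]_d -> R) (x : 'rV[R]_d) : 'rV[R]_d :=
  \row_(k < d) ('D_(delta_mx 0 k) f x).

Definition convex_fun d (f : 'rV[R]_d -> R) : Prop :=
  forall (x y : 'rV[R]_d) (t : R), 0 <= t -> t <= 1 ->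
    f (t *: x + (1 - t) *: y) <= t * f x + (1 - t) * f y.

Definition smooth_fun d (L : R) (f : 'rV[R]_d -> R) : Prop :=
  (forall x, differentiable f x) /\
  forall x y, enorm (grad f x - grad f y) <= L * enorm (x - y).

(* points of R^{nd}: matrices whose i-th row is the block x_i *)
Definition blk n d (x : 'M[R]_(n, d)) (i : 'I_n) : 'rV[R]_d := row i x.
Definition mean n d (x : 'M[R]_(n, d)) : 'rV[R]_d := n%:R^-1 *: \sum_(i < n) row i x.
Definition dotM n d (x y : 'M[R]_(n, d)) : R := \sum_(i < n) dotv (row i x) (row i y).
Definition sqnormM n d (x : 'M[R]_(n, d)) : R := dotM x x.

Section Problem.
Variables (n m d : nat) (ft : 'I_n -> 'I_m -> 'rV[R]_d -> R) (lam p : R).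

Definition floc (i : 'I_n) (z : 'rV[R]_d) : R := m%:R^-1 * \sum_(j < m) ft i j z.

Definition Fobj (x : 'M[R]_(n, d)) : R :=
  n%:R^-1 * \sum_(i < n) floc i (row i x)
  + lam / (2 * n%:R) * \sum_(i < n) sqnorm (row i x - mean x).

Definition gradF (x : 'M[R]_(n, d)) : 'M[R]_(n, d) :=
  \matrix_(i < n, k < d)
    (n%:R^-1 *: grad (floc i) (row i x) + (lam / n%:R) *: (row i x - mean x)) ord0 k.

Definition bregF (w x : 'M[R]_(n, d)) : R := Fobj w - Fobj x - dotM (gradF x) (w - x).

(* estimator, branch with probability 1-p, given the indices js i of the clients *)
Definition g_sample (x w : 'M[R]_(n, d)) (js : {ffun 'I_n -> 'I_m}) : 'M[R]_(n, d) :=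
  \matrix_(i < n, k < d)
    ((n%:R * (1 - p))^-1 *: (grad (ft i (js i)) (row i x) - grad (ft i (js i)) (row i w))
     + n%:R^-1 *: grad (floc i) (row i w)
     + (lam / n%:R) *: (row i w - mean w)) ord0 k.

(* estimator, branch with probability p *)
Definition g_full (x w : 'M[R]_(n, d)) : 'M[R]_(n, d) :=
  \matrix_(i < n, k < d)
    ((lam / (n%:R * p)) *: (row i x - mean x)
     - ((p^-1 - 1) * lam / n%:R) *: (row i w - mean w)
     + n%:R^-1 *: grad (floc i) (row i w)) ord0 k.

(* E ||g - grad F(x)||^2 : with prob. 1-p the indices j_i are drawn independently and
   uniformly in {0..m-1} (m^n equally likely index vectors); with prob. p the second branch. *)
Definition expected_sqerr (x w : 'M[R]_(n, d)) : R :=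
  (1 - p) * ((m ^ n)%:R^-1 *
     \sum_(js : {ffun 'I_n -> 'I_m}) sqnormM (g_sample x w js - gradF x))
  + p * sqnormM (g_full x w - gradF x).

End Problem.
End Defs.

(* Let h = g - grad F(w).  On the first branch (probability 1 - p) the
   block i of h is (grad f~_{i,j}(x_i) - grad f~_{i,j}(w_i)) / (n (1 - p)) with
   j uniform; on the second (probability p) it is lam/(n p) times the change of
   the deviation x_i - xbar versus w_i - wbar.  The estimator is unbiased:
   E h = grad F(x) - grad F(w), so E |g - grad F(x)|^2 = E |h - E h|^2
   <= E |h|^2 (a mixture's variance is at most its second moment).  The
   gradient part of E |h|^2 is bounded by cocoercivity of convex smooth
   functions, |grad f(y) - grad f(x)|^2 <= 2 L D_f(y, x), and the consensus
   part is exactly the Bregman divergence of the quadratic penalty.  Both pieces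
   add up to the Bregman divergence of F, weighted by the two branch constants. *)
From HB Require Import structures.
From mathcomp Require Import all_boot all_order all_algebra.
From mathcomp Require Import all_classical all_reals all_analysis.
From mathcomp Require Import ring lra.
Import Order.TTheory GRing.Theory Num.Theory.
Import numFieldNormedType.Exports.
Set Implicit Arguments. Unset Strict Implicit. Unset Printing Implicit Defensive.
Local Open Scope ring_scope.
Local Open Scope classical_set_scope.

Section InnerProduct.
Variables (R : realType) (d : nat).
Implicit Types (u v z : 'rV[R]_d) (a : R).

Lemma dotvC u v : dotv u v = dotv v u.
Proof. by apply: eq_bigr => k _; rewrite mulrC. Qed.

Lemma dotvDl u v z : dotv (u + z) v = dotv u v + dotv z v.
Proof. by rewrite /dotv -big_split; apply: eq_bigr => k _; rewrite !mxE mulrDl. Qed.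

Lemma dotvBl u v z : dotv (u - z) v = dotv u v - dotv z v.
Proof. by rewrite /dotv -sumrB; apply: eq_bigr => k _; rewrite !mxE mulrBl. Qed.

Lemma dotvZl a u v : dotv (a *: u) v = a * dotv u v.
Proof. by rewrite /dotv mulr_sumr; apply: eq_bigr => k _; rewrite !mxE mulrA. Qed.

Lemma dotvDr u v z : dotv v (u + z) = dotv v u + dotv v z.
Proof. by rewrite dotvC dotvDl !(dotvC v). Qed.

Lemma dotvBr u v z : dotv v (u - z) = dotv v u - dotv v z.
Proof. by rewrite dotvC dotvBl !(dotvC v). Qed.

Lemma dotvZr a u v : dotv v (a *: u) = a * dotv v u.
Proof. by rewrite dotvC dotvZl dotvC. Qed.

Lemma dotv0r v : dotv v 0 = 0.
Proof. by rewrite /dotv big1 // => k _; rewrite mxE mulr0. Qed.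

Lemma dotv_suml m (g : 'I_m -> 'rV[R]_d) v :
  dotv (\sum_(j < m) g j) v = \sum_(j < m) dotv (g j) v.
Proof. by rewrite /dotv exchange_big; apply: eq_bigr => k _; rewrite summxE mulr_suml. Qed.

Lemma sqnorm_ge0 u : 0 <= sqnorm u.
Proof. by apply: sumr_ge0 => k _; rewrite -expr2 sqr_ge0. Qed.

Lemma sqnorm_eq0 u : sqnorm u = 0 -> u = 0.
Proof.
move=> /eqP; rewrite psumr_eq0 => [/allP u0|k _]; last by rewrite -expr2 sqr_ge0.
apply/rowP => k; rewrite mxE.
by apply/eqP; rewrite -sqrf_eq0 expr2; apply: u0; exact: mem_index_enum.
Qed.

Lemma sqnormZ a u : sqnorm (a *: u) = a ^+ 2 * sqnorm u.
Proof. by rewrite /sqnorm dotvZl dotvZr mulrA expr2. Qed.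

Lemma sqnorm_subC u v : sqnorm (u - v) = sqnorm (v - u).
Proof. by rewrite -opprB -scaleN1r sqnormZ sqrrN expr1n mul1r. Qed.

Lemma sqnorm_breg u v : sqnorm u - sqnorm v - 2 * dotv v (u - v) = sqnorm (u - v).
Proof. rewrite /sqnorm !dotvBl !dotvBr (dotvC u v); ring. Qed.

Lemma enorm_sq u : enorm u ^+ 2 = sqnorm u.
Proof. by rewrite /enorm sqr_sqrtr // sqnorm_ge0. Qed.

Lemma enorm_ge0 u : 0 <= enorm u.
Proof. exact: sqrtr_ge0. Qed.

Lemma enorm_eq0 {u} : enorm u = 0 -> u = 0.
Proof. by move=> u0; apply: sqnorm_eq0; rewrite -enorm_sq u0 expr2 mulr0. Qed.

Lemma enormZ a u : enorm (a *: u) = `|a| * enorm u.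
Proof. by rewrite /enorm sqnormZ sqrtrM ?sqr_ge0 // sqrtr_sqr. Qed.

(* Cauchy-Schwarz, from the nonnegativity of sqnorm (|v| u - |u| v). *)
Lemma cauchy_schwarz u v : dotv u v <= enorm u * enorm v.
Proof.
set a := enorm u; set b := enorm v.
have a0 : 0 <= a := enorm_ge0 u.
have b0 : 0 <= b := enorm_ge0 v.
have [a_eq0|a_neq0] := eqVneq a 0.
  by rewrite (enorm_eq0 a_eq0) dotvC dotv0r a_eq0 mul0r.
have [b_eq0|b_neq0] := eqVneq b 0.
  by rewrite (enorm_eq0 b_eq0) dotv0r b_eq0 mulr0.
have := sqnorm_ge0 (b *: u - a *: v).
rewrite /sqnorm dotvBl !dotvBr !dotvZl !dotvZr (dotvC v u).
rewrite -/(sqnorm u) -/(sqnorm v) -(enorm_sq u) -(enorm_sq v) -/a -/b => h.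
have abp : 0 < a * b by rewrite mulr_gt0 // lt0r ?a_neq0 ?b_neq0.
nra.
Qed.

End InnerProduct.

Section FirstOrder.
Variables (R : realType) (d : nat).
Implicit Types (f : 'rV[R]_d -> R) (x y z v : 'rV[R]_d).

Definition bregv f y z : R := f y - f z - dotv (grad f z) (y - z).

Lemma derive_dot f x v : differentiable f x -> 'D_v f x = dotv (grad f x) v.
Proof.
move=> df; rewrite deriveE // {1}(row_sum_delta v) linear_sum.
by apply: eq_bigr => k _; rewrite linearZ /= mxE deriveE // mulrC.
Qed.

Lemma is_derive_line f y v t : differentiable f (t *: v + y) ->
  is_derive t 1 (fun s : R => f (s *: v + y)) (dotv (grad f (t *: v + y)) v).
Proof.
move=> df.
have shiftE : (fun s : R => s^-1 *: (((fun s : R => f (s *: v + y)) \o shift t) (s *: 1)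
                 - f (t *: v + y)))
  = (fun s : R => s^-1 *: ((f \o shift (t *: v + y)) (s *: v) - f (t *: v + y))).
  by apply: funext => s /=; rewrite [s%:A]mulr1 scalerDl addrA.
constructor; first by rewrite /derivable shiftE; exact: diff_derivable.
by rewrite /derive shiftE -/(derive f (t *: v + y) v) derive_dot.
Qed.

Lemma slope_increment f Lt y v t : smooth_fun Lt f -> 0 < t ->
  dotv (grad f (t *: v + y)) v - dotv (grad f y) v <= Lt * t * sqnorm v.
Proof.
move=> [_ lip] t0; rewrite -dotvBl.
apply: (le_trans (cauchy_schwarz _ _)).
have := lip (t *: v + y) y; rewrite addrK enormZ gtr0_norm // => h.
rewrite -enorm_sq expr2 mulrA.
by apply: ler_wpM2r; [exact: enorm_ge0 | rewrite -mulrA].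
Qed.

Lemma descent f Lt y z : smooth_fun Lt f -> bregv f z y <= Lt / 2 * sqnorm (z - y).
Proof.
move=> sf; have df := sf.1.
set v := z - y; set D0 := dotv (grad f y) v; set K := Lt / 2 * sqnorm v.
pose gap s := f (s *: v + y) - (f y + s * D0 + K * s ^+ 2).
have gap_der (t : R) :
    is_derive t (1 : R) gap (dotv (grad f (t *: v + y)) v - (D0 + K * (2 * t))).
  apply: is_deriveB; first exact: is_derive_line.
  by apply: is_derive_eq; rewrite scaler0 add0r mul1r /GRing.scale /=; ring.
have : gap 1 <= gap 0.
  apply: (@ler0_derive1_le_cc _ gap 0 1); rewrite ?in_itv /= ?lexx ?ler01 //.
  - move=> t; rewrite in_itv /= => /andP [t0 _].
    rewrite derive1E (@derive_val _ _ _ _ _ _ _ (gap_der t)).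
    have -> : K * (2 * t) = Lt * t * sqnorm v by rewrite /K; field.
    have := slope_increment y v sf t0; rewrite /D0; lra.
  - by apply: derivable_within_continuous => t _; exact: (@ex_derive _ _ _ _ _ _ _ (gap_der t)).
rewrite /gap scale0r add0r scale1r subrK mul0r expr0n /= mulr0 !addr0 subrr.
rewrite /bregv -/v -/D0 -/K; lra.
Qed.

Lemma bregv_ge0 f x y : convex_fun f -> differentiable f x -> 0 <= bregv f y x.
Proof.
move=> cf dfx; rewrite /bregv -derive_dot // subr_ge0.
pose q := fun h : R => h^-1 *: ((f \o shift x) (h *: (y - x)) - f x).
have q_cvg : q @ (0 : R)^'+ --> 'D_(y - x) f x.
  have q_dcvg : q @ 0^' --> 'D_(y - x) f x := diff_derivable (v := y - x) dfx.
  apply: cvg_trans q_dcvg => A /=.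
  rewrite !nbhs_filterE /= /within /dnbhs /at_right /within /=.
  by apply: filterS => h Ah h0; apply: Ah; rewrite gt_eqF.
apply: (cvgr_to_le q_cvg); near=> h.
have h0 : 0 < h by near: h; exact: nbhs_right_gt.
have h1 : h <= 1 by near: h; apply: nbhs_right_le; exact: ltr01.
have := cf y x h (ltW h0) h1.
have -> : h *: y + (1 - h) *: x = h *: (y - x) + x.
  by apply/matrixP => i k; rewrite !mxE; lra.
move=> hc; rewrite /q /= -[X in _ <= X](mulKf (lt0r_neq0 h0)) /GRing.scale /=.
rewrite ler_pM2l ?invr_gt0 //; lra.
Unshelve. all: by end_near.
Qed.

End FirstOrder.

Section Cocoercivity.
Variables (R : realType) (d : nat).
Implicit Types (f : 'rV[R]_d -> R) (x y z : 'rV[R]_d).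

Lemma bregv_three_point f x y z :
  bregv f y x = bregv f z x - bregv f z y - dotv (grad f y - grad f x) (z - y).
Proof.
rewrite /bregv !dotvBl !dotvBr.
rewrite !(dotvC (grad f x)) !(dotvC (grad f y)); ring.
Qed.

(* Cocoercivity of the gradient of a convex Lt-smooth function (Lt > 0):
   compare x and y through the gradient step z = y - Lt^-1 (grad f y - grad f x). *)
Lemma cocoercive_pos f Lt x y : convex_fun f -> smooth_fun Lt f -> 0 < Lt ->
  sqnorm (grad f y - grad f x) <= 2 * Lt * bregv f y x.
Proof.
move=> cf sf Lt0; set r := Lt^-1; set u := grad f y - grad f x.
set z := y - r *: u.
have zy : z - y = (- r) *: u by rewrite /z addrAC subrr add0r scaleNr.
have lower : 0 <= bregv f z x := bregv_ge0 z cf (sf.1 x).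
have upper := descent y z sf; rewrite zy sqnormZ sqrrN in upper.
have gap : dotv u (z - y) = - r * sqnorm u by rewrite zy dotvZr.
have := bregv_three_point f x y z; rewrite -/u gap => ->.
have upperL : Lt * bregv f z y <= sqnorm u / 2.
  have -> : sqnorm u / 2 = Lt * (Lt / 2 * (r ^+ 2 * sqnorm u)).
    by rewrite /r; field; rewrite gt_eqF.
  by rewrite ler_pM2l.
have lowerL : 0 <= Lt * bregv f z x by rewrite mulr_ge0 // ltW.
have -> : 2 * Lt * (bregv f z x - bregv f z y - - r * sqnorm u)
  = 2 * (Lt * bregv f z x) - 2 * (Lt * bregv f z y) + 2 * sqnorm u.
  by rewrite /r; field; rewrite gt_eqF.
lra.
Qed.

(* Cocoercivity for an arbitrary Lipschitz constant: for Lt <= 0 the gradient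
   is constant and the inequality degenerates. *)
Lemma cocoercive f Lt x y : convex_fun f -> smooth_fun Lt f ->
  sqnorm (grad f y - grad f x) <= 2 * Lt * bregv f y x.
Proof.
move=> cf sf; have [Lt0|Lt_le0] := ltrP 0 Lt; first exact: cocoercive_pos.
have lip := sf.2 y x.
have e0 := enorm_ge0 (grad f y - grad f x); have e1 := enorm_ge0 (y - x).
have /enorm_eq0 -> : enorm (grad f y - grad f x) = 0 by nra.
rewrite [sqnorm 0]dotv0r.
have [-> | Lt_neq0] := eqVneq Lt 0; first by rewrite mulr0 mul0r.
have Lt_lt0 : Lt < 0 by rewrite lt_neqAle Lt_neq0.
have /enorm_eq0 /eqP : enorm (y - x) = 0 by nra.
by rewrite subr_eq0 => /eqP ->; rewrite /bregv !subrr dotv0r subrr mulr0.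
Qed.

End Cocoercivity.

Section Averages.
Variable R : numFieldType.

Definition avg (S : finType) (v : S -> R) : R := #|S|%:R^-1 * \sum_(s : S) v s.

Lemma avg_ord m (v : 'I_m -> R) : avg v = m%:R^-1 * \sum_(j < m) v j.
Proof. by rewrite /avg card_ord. Qed.

Lemma avg_sum (S : finType) (I : finType) (F : I -> S -> R) :
  avg (fun s => \sum_(i : I) F i s) = \sum_(i : I) avg (F i).
Proof. by rewrite /avg exchange_big mulr_sumr. Qed.

Lemma avgZ (S : finType) (a : R) (v : S -> R) : avg (fun s => a * v s) = a * avg v.
Proof. by rewrite /avg -mulr_sumr mulrCA. Qed.

Lemma avg_le (S : finType) (u v : S -> R) : (forall s, u s <= v s) -> avg u <= avg v.
Proof.
by move=> uv; apply: ler_wpM2l; [rewrite invr_ge0 ler0n | apply: ler_sum => s _].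
Qed.

Lemma avg_ffun_coord (I J : finType) (i : I) (q : J -> R) : (0 < #|J|)%N ->
  avg (fun f : {ffun I -> J} => q (f i)) = avg q.
Proof.
move=> J0; pose F l j := if l == i then q j else 1.
have prodE (f : {ffun I -> J}) : q (f i) = \prod_(l : I) F l (f l).
  by rewrite (bigD1 i) //= /F eqxx big1 ?mulr1 // => l /negbTE ->.
have others : \prod_(l | l != i) \sum_(j : J) F l j = #|J|%:R ^+ #|I|.-1.
  rewrite -(cardC1 i) -prodr_const; apply: eq_bigr => l /negbTE li.
  by rewrite /F li sumr_const -mulr_natl mulr1.
have I0 : (0 < #|I|)%N by apply/card_gt0P; exists i.
rewrite /avg (eq_bigr _ (fun f _ => prodE f)) -bigA_distr_bigA /= (bigD1 i) //=.
rewrite {1}/F eqxx others card_ffun natrX -{1}(prednK I0) exprS invfM.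
have JN : #|J|%:R ^+ #|I|.-1 != 0 :> R by rewrite expf_neq0 // pnatr_eq0 -lt0n.
by rewrite mulrCA -mulrA mulrCA mulVf ?mulr1.
Qed.

Lemma avg_ffun_sum (I J : finType) (Q : I -> J -> R) : (0 < #|J|)%N ->
  avg (fun f : {ffun I -> J} => \sum_(i : I) Q i (f i)) = \sum_(i : I) avg (Q i).
Proof.
by move=> J0; rewrite avg_sum; apply: eq_bigr => i _; exact: avg_ffun_coord.
Qed.

Lemma mixture_variance (S : finType) (q u mu : R) (v : S -> R) : (0 < #|S|)%N ->
  mu = (1 - q) * avg v + q * u ->
  (1 - q) * avg (fun s => (v s - mu) ^+ 2) + q * (u - mu) ^+ 2
  = (1 - q) * avg (fun s => v s ^+ 2) + q * u ^+ 2 - mu ^+ 2.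
Proof.
move=> S0 muE.
have expand : avg (fun s => (v s - mu) ^+ 2)
    = avg (fun s => v s ^+ 2) - 2 * mu * avg v + mu ^+ 2.
  have sumE : \sum_(s : S) (v s - mu) ^+ 2
      = \sum_(s : S) v s ^+ 2 - 2 * mu * \sum_(s : S) v s + #|S|%:R * mu ^+ 2.
    rewrite (eq_bigr (fun s => v s ^+ 2 - 2 * mu * v s + mu ^+ 2)) => [|s _];
      last by ring.
    by rewrite big_split sumrB -mulr_sumr sumr_const [#|S|%:R * _]mulr_natl.
  by rewrite /avg sumE; field; rewrite pnatr_eq0 -lt0n.
rewrite expand; move: muE => ->; ring.
Qed.

End Averages.

Section Blocks.
Variables (R : realType) (n d : nat).
Implicit Types x w : 'M[R]_(n, d).

Definition dev x (i : 'I_n) : 'rV[R]_d := row i x - mean x.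

Lemma sum_dev x : (0 < n)%N -> \sum_(i < n) dev x i = 0.
Proof.
move=> n0; rewrite sumrB sumr_const card_ord /mean -scaler_nat scalerA.
by rewrite mulfV ?scale1r ?subrr // pnatr_eq0 -lt0n.
Qed.

Lemma sqnorm_entries (u : 'rV[R]_d) : sqnorm u = \sum_(k < d) u ord0 k ^+ 2.
Proof. by apply: eq_bigr => k _; rewrite expr2. Qed.

Lemma sqnormM_entries x : sqnormM x = \sum_(i < n) \sum_(k < d) x i k ^+ 2.
Proof. by apply: eq_bigr => i _; apply: eq_bigr => k _; rewrite mxE expr2. Qed.

(* Bregman divergence of the consensus penalty sum_i |x_i - xbar|^2: since the
   deviations sum to zero, the mean shift does not contribute. *)
Lemma consensus_breg x w : (0 < n)%N ->
  \sum_(i < n) sqnorm (dev w i) - \sum_(i < n) sqnorm (dev x i)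
    - 2 * \sum_(i < n) dotv (dev x i) (row i w - row i x)
  = \sum_(i < n) sqnorm (dev w i - dev x i).
Proof.
move=> n0.
have shift i : row i w - row i x = (dev w i - dev x i) + (mean w - mean x).
  by rewrite /dev; apply/rowP => k; rewrite !mxE; ring.
have cross : \sum_(i < n) dotv (dev x i) (mean w - mean x) = 0.
  by rewrite -(@dotv_suml _ _ n (dev x)) sum_dev // dotvC dotv0r.
have termwise i : sqnorm (dev w i) - sqnorm (dev x i) - 2 * dotv (dev x i) (row i w - row i x)
    = sqnorm (dev w i - dev x i) - 2 * dotv (dev x i) (mean w - mean x).
  by rewrite shift dotvDr -sqnorm_breg; ring.
rewrite -sumrB mulr_sumr -sumrB (eq_bigr _ (fun i _ => termwise i)).
by rewrite sumrB -mulr_sumr cross mulr0 subr0.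
Qed.

End Blocks.

Section Problem.
Variables (R : realType) (n m d : nat) (ft : 'I_n -> 'I_m -> 'rV[R]_d -> R) (lam p : R).
Hypothesis n_gt0 : (0 < n)%N.
Hypothesis m_gt0 : (0 < m)%N.
Hypothesis ft_diff : forall i j z, differentiable (ft i j) z.
Implicit Types x w : 'M[R]_(n, d).

Lemma grad_floc i z : grad (floc ft i) z = m%:R^-1 *: \sum_(j < m) grad (ft i j) z.
Proof.
have -> : floc ft i = m%:R^-1 \*: \sum_(j < m) ft i j.
  by apply: funext => y; rewrite /floc /= fct_sumE.
apply/rowP => k; rewrite !mxE summxE deriveZ; last first.
  by apply: derivable_sum => j; exact: diff_derivable.
rewrite derive_sum; last by move=> j; exact: diff_derivable.
by congr (_ * _); apply: eq_bigr => j _; rewrite mxE.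
Qed.

Lemma bregv_floc i y z : bregv (floc ft i) y z = avg (fun j => bregv (ft i j) y z).
Proof.
by rewrite avg_ord /bregv grad_floc dotvZl dotv_suml /floc -!mulrBr -!sumrB.
Qed.

Lemma row_gradF x i :
  row i (gradF ft lam x) = n%:R^-1 *: grad (floc ft i) (row i x) + (lam / n%:R) *: dev x i.
Proof. by apply/rowP => k; rewrite !mxE. Qed.

Lemma bregF_decomp x w :
  bregF ft lam w x = n%:R^-1 * \sum_(i < n) avg (fun j => bregv (ft i j) (row i w) (row i x))
    + lam / (2 * n%:R) * \sum_(i < n) sqnorm (dev w i - dev x i).
Proof.
have rowB i : row i (w - x) = row i w - row i x by apply/rowP => k; rewrite !mxE.
have inner : dotM (gradF ft lam x) (w - x)
  = n%:R^-1 * \sum_(i < n) dotv (grad (floc ft i) (row i x)) (row i w - row i x)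
    + lam / n%:R * \sum_(i < n) dotv (dev x i) (row i w - row i x).
  rewrite /dotM !mulr_sumr -big_split; apply: eq_bigr => i _.
  by rewrite row_gradF rowB dotvDl !dotvZl.
rewrite -(consensus_breg x w n_gt0) -(eq_bigr _ (fun i _ => bregv_floc i _ _)).
rewrite /bregF /Fobj inner /bregv !sumrB.
by rewrite /dev; field; rewrite pnatr_eq0 -lt0n.
Qed.

Definition gdiff x w i j : 'rV[R]_d := grad (ft i j) (row i x) - grad (ft i j) (row i w).

Hypothesis p_gt0 : 0 < p.
Hypothesis p_lt1 : p < 1.

Lemma n_neq0 : n%:R != 0 :> R. Proof. by rewrite pnatr_eq0 -lt0n. Qed.
Lemma m_neq0 : m%:R != 0 :> R. Proof. by rewrite pnatr_eq0 -lt0n. Qed.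
Lemma p_neq0 : p != 0. Proof. by rewrite gt_eqF. Qed.
Lemma p_neq1 : 1 - p != 0. Proof. by rewrite subr_eq0 eq_sym lt_eqF. Qed.

Lemma sample_err_entry x w js i k :
  (g_sample ft lam p x w js - gradF ft lam x) i k
  = (n%:R * (1 - p))^-1 * gdiff x w i (js i) ord0 k - (gradF ft lam x - gradF ft lam w) i k.
Proof. by rewrite /gdiff !mxE; ring. Qed.

Lemma full_err_entry x w i k :
  (g_full ft lam p x w - gradF ft lam x) i k
  = lam / (n%:R * p) * (dev x i - dev w i) ord0 k - (gradF ft lam x - gradF ft lam w) i k.
Proof. by rewrite /dev !mxE; field; rewrite n_neq0 p_neq0. Qed.

Lemma mean_err_entry x w i k :
  (gradF ft lam x - gradF ft lam w) i k
  = (1 - p) * avg (fun j => (n%:R * (1 - p))^-1 * gdiff x w i j ord0 k)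
    + p * (lam / (n%:R * p) * (dev x i - dev w i) ord0 k).
Proof.
have -> : (gradF ft lam x - gradF ft lam w) i k
    = (row i (gradF ft lam x) - row i (gradF ft lam w)) ord0 k by rewrite !mxE.
rewrite !row_gradF !grad_floc avgZ avg_ord /gdiff /dev.
rewrite (eq_bigr (fun j => grad (ft i j) (row i x) ord0 k - grad (ft i j) (row i w) ord0 k)).
  by rewrite sumrB !mxE !summxE; field; rewrite n_neq0 m_neq0 p_neq0 p_neq1.
by move=> j _; rewrite !mxE.
Qed.

(* The mean squared error is at most the second moment of the centred estimator,
   entry by entry (the variance of a mixture never exceeds its second moment). *)
Lemma expected_sqerr_le x w :
  expected_sqerr ft lam p x w <= \sum_(i < n) \sum_(k < d)
    ((1 - p) * avg (fun j => ((n%:R * (1 - p))^-1 * gdiff x w i j ord0 k) ^+ 2)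
     + p * (lam / (n%:R * p) * (dev x i - dev w i) ord0 k) ^+ 2).
Proof.
set c := (n%:R * (1 - p))^-1; set delta := gradF ft lam x - gradF ft lam w.
have sampleE : (m ^ n)%:R^-1 * \sum_js sqnormM (g_sample ft lam p x w js - gradF ft lam x)
    = \sum_(i < n) \sum_(k < d) avg (fun j => (c * gdiff x w i j ord0 k - delta i k) ^+ 2).
  pose Q i j := \sum_(k < d) (c * gdiff x w i j ord0 k - delta i k) ^+ 2.
  transitivity (avg (fun js : {ffun 'I_n -> 'I_m} => \sum_(i < n) Q i (js i))).
    rewrite /avg card_ffun !card_ord; congr (_ * _); apply: eq_bigr => js _.
    rewrite sqnormM_entries; apply: eq_bigr => i _; apply: eq_bigr => k _.
    by rewrite sample_err_entry.
  by rewrite (avg_ffun_sum Q) ?card_ord //; apply: eq_bigr => i _; rewrite avg_sum.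
have fullE : sqnormM (g_full ft lam p x w - gradF ft lam x)
    = \sum_(i < n) \sum_(k < d) (lam / (n%:R * p) * (dev x i - dev w i) ord0 k - delta i k) ^+ 2.
  rewrite sqnormM_entries; apply: eq_bigr => i _; apply: eq_bigr => k _.
  by rewrite full_err_entry.
rewrite /expected_sqerr sampleE fullE !mulr_sumr -big_split; apply: ler_sum => i _.
rewrite !mulr_sumr -big_split; apply: ler_sum => k _ /=.
rewrite (mixture_variance _ (mean_err_entry x w i k)) ?card_ord //.
by rewrite lerBlDr lerDl sqr_ge0.
Qed.

Lemma second_moment_blocks x w :
  \sum_(i < n) \sum_(k < d)
    ((1 - p) * avg (fun j => ((n%:R * (1 - p))^-1 * gdiff x w i j ord0 k) ^+ 2)
     + p * (lam / (n%:R * p) * (dev x i - dev w i) ord0 k) ^+ 2)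
  = (1 - p) * (n%:R * (1 - p))^-1 ^+ 2 * \sum_(i < n) avg (fun j => sqnorm (gdiff x w i j))
    + p * (lam / (n%:R * p)) ^+ 2 * \sum_(i < n) sqnorm (dev w i - dev x i).
Proof.
rewrite !mulr_sumr -big_split; apply: eq_bigr => i _.
set c := (n%:R * (1 - p))^-1; set a := lam / (n%:R * p).
have gpart : \sum_(k < d) (1 - p) * avg (fun j => (c * gdiff x w i j ord0 k) ^+ 2)
    = (1 - p) * c ^+ 2 * avg (fun j => sqnorm (gdiff x w i j)).
  rewrite -mulr_sumr -(avg_sum (fun k j => (c * gdiff x w i j ord0 k) ^+ 2)) -mulrA.
  rewrite -(avgZ (c ^+ 2)); congr (_ * avg _); apply: funext => j.
  rewrite sqnorm_entries mulr_sumr.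
  by apply: eq_bigr => k _; rewrite exprMn.
have cpart : \sum_(k < d) p * (a * (dev x i - dev w i) ord0 k) ^+ 2
    = p * a ^+ 2 * sqnorm (dev w i - dev x i).
  rewrite sqnorm_subC sqnorm_entries -mulrA !mulr_sumr.
  by apply: eq_bigr => k _; rewrite exprMn.
by rewrite big_split /= gpart cpart.
Qed.

Lemma gdiff_sqnorm_le x w Lt :
  (forall i j, convex_fun (ft i j)) -> (forall i j, smooth_fun Lt (ft i j)) ->
  \sum_(i < n) avg (fun j => sqnorm (gdiff x w i j))
  <= 2 * Lt * \sum_(i < n) avg (fun j => bregv (ft i j) (row i w) (row i x)).
Proof.
move=> hconv hsmooth; rewrite mulr_sumr; apply: ler_sum => i _.
rewrite -avgZ; apply: avg_le => j; rewrite /gdiff sqnorm_subC.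
exact: cocoercive.
Qed.

Lemma expected_sqerr_bregman x w Lt :
  (forall i j, convex_fun (ft i j)) -> (forall i j, smooth_fun Lt (ft i j)) ->
  expected_sqerr ft lam p x w
  <= (1 - p) * (n%:R * (1 - p))^-1 ^+ 2
       * (2 * Lt * \sum_(i < n) avg (fun j => bregv (ft i j) (row i w) (row i x)))
     + p * (lam / (n%:R * p)) ^+ 2 * \sum_(i < n) sqnorm (dev w i - dev x i).
Proof.
move=> hconv hsmooth; apply: le_trans (expected_sqerr_le x w) _.
rewrite second_moment_blocks lerD // ler_wpM2l ?gdiff_sqnorm_le //.
by rewrite mulr_ge0 ?sqr_ge0 // subr_ge0 ltW.
Qed.

End Problem.

Lemma le_max_combination (R : realDomainType) (L1 L2 a b : R) : 0 <= a -> 0 <= b ->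
  L1 * a + L2 * b <= Num.max L1 L2 * (a + b).
Proof.
move=> a0 b0; rewrite mulrDr lerD // ler_wpM2r // le_max lexx ?orbT //.
Qed.

Lemma branch_weights (R : realFieldType) (n : nat) (Lt lam p B Q : R) :
  (0 < n)%N -> 0 < lam -> 0 < p -> p < 1 -> 0 <= B -> 0 <= Q ->
  (1 - p) * (n%:R * (1 - p))^-1 ^+ 2 * (2 * Lt * B) + p * (lam / (n%:R * p)) ^+ 2 * Q
  <= 2 * Num.max (Lt / (n%:R * (1 - p))) (lam / (n%:R * p))
       * (n%:R^-1 * B + lam / (2 * n%:R) * Q).
Proof.
move=> n0 lam0 p0 p1 B0 Q0.
have nN : n%:R != 0 :> R by rewrite pnatr_eq0 -lt0n.
have pN : p != 0 by rewrite gt_eqF.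
have p1N : 1 - p != 0 by rewrite subr_eq0 eq_sym lt_eqF.
have -> : (1 - p) * (n%:R * (1 - p))^-1 ^+ 2 * (2 * Lt * B) + p * (lam / (n%:R * p)) ^+ 2 * Q
    = Lt / (n%:R * (1 - p)) * (2 * (n%:R^-1 * B))
      + lam / (n%:R * p) * (2 * (lam / (2 * n%:R) * Q)).
  by field; rewrite nN pN p1N.
have -> : forall M : R, 2 * M * (n%:R^-1 * B + lam / (2 * n%:R) * Q)
    = M * (2 * (n%:R^-1 * B) + 2 * (lam / (2 * n%:R) * Q)) by move=> M; ring.
have lam_n : 0 <= lam / (2 * n%:R) by rewrite divr_ge0 ?mulr_ge0 ?ler0n ?ltW.
apply: le_max_combination; apply: mulr_ge0 => //; apply: mulr_ge0 => //.
Qed.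

Theorem mainTheorem7 (R : realType) (n m d : nat)
  (ft : 'I_n -> 'I_m -> 'rV[R]_d -> R) (Lt lam p : R)
  (hn : (0 < n)%N) (hm : (0 < m)%N)
  (hconv : forall i j, convex_fun (ft i j))
  (hsmooth : forall i j, smooth_fun Lt (ft i j))
  (hlam : 0 < lam) (hp0 : 0 < p) (hp1 : p < 1)
  (x w : 'M[R]_(n, d)) :
  expected_sqerr ft lam p x w
    <= 2 * Num.max (Lt / (n%:R * (1 - p))) (lam / (n%:R * p)) * bregF ft lam w x.
Proof.
have ft_diff i j z : differentiable (ft i j) z := (hsmooth i j).1 z.
rewrite (bregF_decomp lam hn ft_diff).
apply: le_trans (expected_sqerr_bregman lam hn hm ft_diff hp0 hp1 x w hconv hsmooth) _.
apply: branch_weights => //.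
  apply: sumr_ge0 => i _; rewrite avg_ord mulr_ge0 ?invr_ge0 ?ler0n //.
  by apply: sumr_ge0 => j _; apply: bregv_ge0.
by apply: sumr_ge0 => i _; exact: sqnorm_ge0.
Qed.
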